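(* Let $\beta\in[0,1)$, let $S:\mathbb R^n\to\mathbb R^n$ be a $\beta$-contraction and $T:\mathbb R^n\to\mathbb R^n$ a nonexpansive mapping with $\operatorname{Fix}(T)\ne\emptyset$. Let $\alpha_k=\min\{2/(k(1-\beta)),1\}$ for $k\ge1$, and let $\mathbf x^0\in\mathbb R^n$ and, for $k\ge1$, $\mathbf y^k=T(\mathbf x^{k-1})$, $\mathbf z^k=S(\mathbf x^{k-1})$, $\mathbf x^k=\alpha_k\mathbf z^k+(1-\alpha_k)\mathbf y^k$. Then for any $\tilde{\mathbf x}\in\operatorname{Fix}(T)$ and all $k\ge1$, $$\|\mathbf x^k-\mathbf x^{k-1}\|\le\frac{2C_{\tilde{\mathbf x}}J}{(1-\beta)k},\qquad \|\mathbf y^k-\mathbf x^{k-1}\|\le\frac{2C_{\tilde{\mathbf x}}(J+2)}{(1-\beta)k},$$ where $J=\lfloor 2/(1-\beta)\rfloor$ and $C_{\tilde{\mathbf x}}=\max\{\|\mathbf x^0-\tilde{\mathbf x}\|,\ \frac{1}{1-\beta}\|\tilde{\mathbf x}-S(\tilde{\mathbf x})\|\}$. In particular both sequences tend to $0$.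
   Context: A mapping $S$ is a $\beta$-contraction if $\|S(\mathbf x)-S(\mathbf y)\|\le\beta\|\mathbf x-\mathbf y\|$ for all $\mathbf x,\mathbf y$; $T$ is nonexpansive if this holds with constant $1$. $\operatorname{Fix}(T)=\{\mathbf x:T(\mathbf x)=\mathbf x\}$. *)

From mathcomp Require Import all_boot.
From Stdlib Require Import Reals.
Open Scope R_scope.

Definition vec (n : nat) := 'I_n -> R.

Definition vnorm {n : nat} (x : vec n) : R :=
  sqrt (\big[Rplus/0]_(i < n) (x i * x i)).

Definition vsub {n : nat} (x y : vec n) : vec n := fun i => x i - y i.

Definition vcomb {n : nat} (a : R) (x : vec n) (b : R) (y : vec n) : vec n :=
  fun i => a * x i + b * y i.

Definition is_contraction {n : nat} (beta : R) (S : vec n -> vec n) : Prop :=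
  forall x y, vnorm (vsub (S x) (S y)) <= beta * vnorm (vsub x y).

Definition nonexpansive {n : nat} (T : vec n -> vec n) : Prop :=
  is_contraction 1 T.

Definition Fix {n : nat} (T : vec n -> vec n) (x : vec n) : Prop := T x = x.

Definition alpha (beta : R) (k : nat) : R := Rmin (2 / (INR k * (1 - beta))) 1.

Fixpoint iter_x {n : nat} (beta : R) (S T : vec n -> vec n) (x0 : vec n) (k : nat)
  : vec n :=
  match k with
  | O => x0
  | Datatypes.S k' =>
      let xp := iter_x beta S T x0 k' in
      vcomb (alpha beta k) (S xp) (1 - alpha beta k) (T xp)
  end.

(* J = floor (2/(1-beta)) ; Int_part is the floor function on R *)
Definition Jconst (beta : R) : R := IZR (Int_part (2 / (1 - beta))).

Definition Cconst {n : nat} (beta : R) (S : vec n -> vec n) (x0 xt : vec n) : R :=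
  Rmax (vnorm (vsub x0 xt)) (/ (1 - beta) * vnorm (vsub xt (S xt))).

(* Every iterate stays in the ball of radius C around the fixed point xt: the ball is
   invariant under T and, by the choice of C, under S.  Hence consecutive steps and
   |S x - T x| along the iteration are at most 2C.  Writing x^{k+1} - x^k as a
   combination of S-differences, T-differences and S x^{k-1} - T x^{k-1} gives
     d_{k+1} <= (1 - alpha_{k+1} (1 - beta)) d_k + |alpha_{k+1} - alpha_k| 2C.
   While alpha_k = 1 (k <= J) the bound 2C already gives d_k <= 2CJ/((1-beta)k); from
   k = J + 1 on, alpha_k = 2/((1-beta)k) and the recursion propagates this bound, the
   excess J - 2 >= 0 absorbing the variation of alpha.  The residual T x^{k-1} - x^{k-1}
   differs from x^k - x^{k-1} by alpha_k (S x^{k-1} - T x^{k-1}), of norm at most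
   4C/((1-beta)k). *)

From mathcomp Require Import all_boot.
From Stdlib Require Import Reals Lra Psatz FunctionalExtensionality.
Open Scope R_scope.

Section EuclideanNorm.
Context {n : nat}.
Implicit Types (r : seq 'I_n) (F x y : 'I_n -> R).

Lemma sumR_ge0 r F : (forall i, 0 <= F i) -> 0 <= \big[Rplus/0]_(i <- r) F i.
Proof.
move=> F_ge0; elim: r => [|a r IH]; first by rewrite big_nil; lra.
by rewrite big_cons; move: (F_ge0 a); lra.
Qed.

Lemma sumR_sqr_ge0 r x : 0 <= \big[Rplus/0]_(i <- r) (x i * x i).
Proof. by apply: sumR_ge0 => i; nra. Qed.

Lemma sumR_mull r a F :
  \big[Rplus/0]_(i <- r) (a * F i) = a * \big[Rplus/0]_(i <- r) F i.
Proof.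
elim: r => [|b r IH]; first by rewrite !big_nil; ring.
by rewrite !big_cons IH; ring.
Qed.

Lemma sumR_sqrD r x y :
  \big[Rplus/0]_(i <- r) ((x i + y i) * (x i + y i)) =
  \big[Rplus/0]_(i <- r) (x i * x i) + 2 * \big[Rplus/0]_(i <- r) (x i * y i)
  + \big[Rplus/0]_(i <- r) (y i * y i).
Proof.
elim: r => [|a r IH]; first by rewrite !big_nil; ring.
by rewrite !big_cons IH; ring.
Qed.

Lemma sumR_Cauchy_Schwarz r x y :
  let D := \big[Rplus/0]_(i <- r) (x i * y i) in
  D * D <= \big[Rplus/0]_(i <- r) (x i * x i) * \big[Rplus/0]_(i <- r) (y i * y i).
Proof.
elim: r => [|a r]; first by rewrite /= !big_nil; lra.
rewrite /= !big_cons.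
have := sumR_sqr_ge0 r x; have := sumR_sqr_ge0 r y.
set A := \big[Rplus/0]_(i <- r) (x i * x i).
set B := \big[Rplus/0]_(i <- r) (y i * y i).
set D := \big[Rplus/0]_(i <- r) (x i * y i).
move: (x a) (y a) => u v; clearbody A B D => B_ge0 A_ge0 IH.
suff : 2 * u * v * D <= u * u * B + v * v * A by nra.
have [A_gt0 | A0] := Rle_lt_or_eq_dec 0 A A_ge0; last first.
  subst A; have -> : D = 0 by nra.
  nra.
have : 0 <= A * (u * u * B + v * v * A - 2 * u * v * D).
  have -> : A * (u * u * B + v * v * A - 2 * u * v * D) =
    (A * v - u * D) * (A * v - u * D) + u * u * (A * B - D * D) by ring.
  apply: Rplus_le_le_0_compat; first exact: Rle_0_sqr.
  by apply: Rmult_le_pos; nra.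
nra.
Qed.

Lemma vnorm_ge0 x : 0 <= vnorm x.
Proof. exact: sqrt_pos. Qed.

Lemma eq_vnorm x y : (forall i, x i = y i) -> vnorm x = vnorm y.
Proof. by move=> exy; rewrite (functional_extensionality x y exy). Qed.

Lemma vnormD x y : vnorm (fun i => x i + y i) <= vnorm x + vnorm y.
Proof.
rewrite /vnorm sumR_sqrD.
have := sumR_Cauchy_Schwarz (index_enum 'I_n) x y.
have := sumR_sqr_ge0 (index_enum 'I_n) x; have := sumR_sqr_ge0 (index_enum 'I_n) y.
rewrite /=.
set A := \big[Rplus/0]_(i < n) (x i * x i).
set B := \big[Rplus/0]_(i < n) (y i * y i).
set D := \big[Rplus/0]_(i < n) (x i * y i).
clearbody A B D => B_ge0 A_ge0 CS.
have sqrtA := sqrt_sqrt A A_ge0; have sqrtB := sqrt_sqrt B B_ge0.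
have := sqrt_pos A; have := sqrt_pos B => sqrtB_ge0 sqrtA_ge0.
have D_le : D <= sqrt A * sqrt B.
  rewrite -sqrt_mult_alt //; apply: Rle_trans (Rle_abs D) _.
  by rewrite -sqrt_Rsqr_abs; exact: sqrt_le_1_alt.
rewrite -(sqrt_square (sqrt A + sqrt B)); last lra.
by apply: sqrt_le_1_alt; nra.
Qed.

Lemma vnormZ a x : vnorm (fun i => a * x i) = Rabs a * vnorm x.
Proof.
rewrite /vnorm -sqrt_Rsqr_abs -sqrt_mult_alt; last exact: Rle_0_sqr.
by rewrite -sumR_mull; congr sqrt; apply: eq_bigr => i _; rewrite /Rsqr; ring.
Qed.

Lemma vnorm_comb2 a b x y :
  vnorm (fun i => a * x i + b * y i) <= Rabs a * vnorm x + Rabs b * vnorm y.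
Proof. by rewrite -!vnormZ; exact: vnormD. Qed.

Lemma vnorm_comb3 a b c x y z :
  vnorm (fun i => a * x i + b * y i + c * z i) <=
  Rabs a * vnorm x + Rabs b * vnorm y + Rabs c * vnorm z.
Proof.
apply: Rle_trans (vnormD (fun i => a * x i + b * y i) (fun i => c * z i)) _.
by rewrite vnormZ; have := vnorm_comb2 a b x y; lra.
Qed.

Lemma vsub_triangle x y z :
  vnorm (vsub x z) <= vnorm (vsub x y) + vnorm (vsub y z).
Proof.
rewrite (@eq_vnorm _ (fun i => vsub x y i + vsub y z i)); first exact: vnormD.
by move=> i; rewrite /vsub; ring.
Qed.

Lemma vsub_sym x y : vnorm (vsub x y) = vnorm (vsub y x).
Proof.
rewrite (@eq_vnorm _ (fun i => -1 * vsub y x i)); last by move=> i; rewrite /vsub; ring.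
by rewrite vnormZ Rabs_Ropp Rabs_R1; ring.
Qed.

End EuclideanNorm.

(* The step from k - 1 = J to k = J + 1, where alpha_{k-1} = 1 and alpha_k = 2/(ck). *)
Lemma recursion_step_threshold (c C J k D : R) :
  0 < c -> c <= 1 -> 0 <= C -> c * J <= 2 -> 2 <= J -> 2 < c * k -> k <= J + 1 ->
  0 <= D <= 2 * C ->
  (1 - 2 / (c * k) * c) * D + Rabs (2 / (c * k) - 1) * (2 * C) <= 2 * C * J / (c * k).
Proof.
move=> c_gt0 c_le1 C_ge0 cJ_le2 J_ge2 ck_gt2 k_le D_bounds.
have ck_gt0 : 0 < c * k by lra.
rewrite /Rdiv; set q := / (c * k).
have q_inv : c * k * q = 1 by apply: Rinv_r; lra.
have q_gt0 : 0 < q by apply: Rinv_0_lt_compat.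
have q_lt : 2 * q < 1 by rewrite -q_inv; apply: Rmult_lt_compat_r; lra.
rewrite Rabs_left1; last lra.
have qc_le : 2 * q * c <= 1.
  have k_gt2 : 2 < k by nra.
  have : 2 * (q * c) < k * (q * c) by apply: Rmult_lt_compat_r; nra.
  nra.
have : (1 - 2 * q * c) * D <= (1 - 2 * q * c) * (2 * C) by nra.
have : 2 - 2 * q * c - 2 * q - J * q <= 0.
  have : 2 * c * k - 2 * c - 2 - J <= 0 by nra.
  nra.
nra.
Qed.

(* A step with k >= J + 1, where alpha_k = 2/(ck) and alpha_{k+1} = 2/(c(k+1)). *)
Lemma recursion_step_beyond (c C J k D : R) :
  0 < c -> 0 <= C -> 2 <= J -> 2 <= k -> 0 <= D <= 2 * C * J / (c * k) ->
  (1 - 2 / (c * (k + 1)) * c) * D + Rabs (2 / (c * (k + 1)) - 2 / (c * k)) * (2 * C)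
    <= 2 * C * J / (c * (k + 1)).
Proof.
move=> c_gt0 C_ge0 J_ge2 k_ge2 D_bounds.
have ck_pos : 0 < c * k * (k + 1) by apply: Rmult_lt_0_compat; nra.
rewrite Rabs_minus_sym Rabs_pos_eq; last first.
  have -> : 2 / (c * k) - 2 / (c * (k + 1)) = 2 / (c * k * (k + 1)) by field; lra.
  by apply: Rle_mult_inv_pos; lra.
have -> : 2 / (c * (k + 1)) * c = 2 / (k + 1) by field; lra.
have contr_ge0 : 0 <= 1 - 2 / (k + 1).
  have -> : 1 - 2 / (k + 1) = (k - 1) / (k + 1) by field; lra.
  by apply: Rle_mult_inv_pos; lra.
have : (1 - 2 / (k + 1)) * D <= (1 - 2 / (k + 1)) * (2 * C * J / (c * k)) by nra.
(* the slack is exactly the excess of J over 2 *)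
have : 0 <= 2 * C * (J - 2) / (c * k * (k + 1)) by apply: Rle_mult_inv_pos; nra.
have -> : 2 * C * J / (c * (k + 1)) = (1 - 2 / (k + 1)) * (2 * C * J / (c * k))
    + (2 / (c * k) - 2 / (c * (k + 1))) * (2 * C) + 2 * C * (J - 2) / (c * k * (k + 1)).
  by field; lra.
lra.
Qed.

Section StepSizes.
Variable beta : R.
Hypotheses (beta_ge0 : 0 <= beta) (beta_lt1 : beta < 1).
Local Notation J := (Jconst beta).

Lemma Jconst_bounds : (1 - beta) * J <= 2 < (1 - beta) * (J + 1).
Proof.
have [floor_le floor_gt] := base_Int_part (2 / (1 - beta)).
have <- : (1 - beta) * (2 / (1 - beta)) = 2 by field; lra.
by rewrite /Jconst; split; [apply: Rmult_le_compat_l | apply: Rmult_lt_compat_l]; lra.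
Qed.

Lemma Jconst_ge2 : 2 <= J.
Proof.
have [_ floor_gt] := base_Int_part (2 / (1 - beta)).
have : 2 <= 2 / (1 - beta).
  rewrite -{1}(Rdiv_1_r 2); apply: Rmult_le_compat_l; first lra.
  by apply: Rinv_le_contravar; lra.
move: floor_gt; rewrite /Jconst => floor_gt ge2.
have /lt_IZR floor_gt1 : 1 < IZR (Int_part (2 / (1 - beta))) by lra.
by apply: IZR_le; lia.
Qed.

Lemma le_Jconst_or_ge (k : nat) : INR k <= J \/ J + 1 <= INR k.
Proof.
rewrite /Jconst INR_IZR_INZ -plus_IZR.
have [le | gt] := Z.le_gt_cases (Z.of_nat k) (Int_part (2 / (1 - beta))).
  by left; apply: IZR_le.
by right; apply: IZR_le; lia.
Qed.

Lemma alpha_ge0_le1 k : (1 <= k)%nat -> 0 <= alpha beta k <= 1.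
Proof.
move=> k_pos; have k_ge1 : 1 <= INR k by apply: (le_INR 1); apply/leP.
split; last exact: Rmin_r.
by apply: Rmin_glb; [apply: Rle_mult_inv_pos; nra | lra].
Qed.

Lemma alpha_le k : alpha beta k <= 2 / ((1 - beta) * INR k).
Proof. by rewrite Rmult_comm; exact: Rmin_l. Qed.

Lemma alpha_small k : (1 <= k)%nat -> INR k <= J -> alpha beta k = 1.
Proof.
move=> k_pos k_le; have k_ge1 : 1 <= INR k by apply: (le_INR 1); apply/leP.
have [cJ_le _] := Jconst_bounds.
have ck_pos : 0 < INR k * (1 - beta) by nra.
rewrite /alpha Rmin_right //.
have -> : 1 = 2 / 2 by field.
apply: Rmult_le_compat_l; first lra.
by apply: Rinv_le_contravar; nra.
Qed.

Lemma alpha_large k : J + 1 <= INR k -> alpha beta k = 2 / ((1 - beta) * INR k).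
Proof.
move=> k_ge; have [_ cJ_gt] := Jconst_bounds.
have ck_gt2 : 2 < (1 - beta) * INR k by nra.
rewrite /alpha Rmult_comm Rmin_left //.
have -> : 1 = 2 / 2 by field.
apply: Rmult_le_compat_l; first lra.
by apply: Rinv_le_contravar; nra.
Qed.

Lemma recursive_step_bound (C : R) (D : nat -> R) :
  0 <= C -> (forall m, 0 <= D m <= 2 * C) ->
  (forall m, D m.+1 <= (1 - alpha beta m.+2 * (1 - beta)) * D m
                       + Rabs (alpha beta m.+2 - alpha beta m.+1) * (2 * C)) ->
  forall m, D m <= 2 * C * J / ((1 - beta) * INR m.+1).
Proof.
move=> C_ge0 D_bounds D_rec.
have [cJ_le cJ_gt] := Jconst_bounds; have J_ge2 := Jconst_ge2.
have direct m : INR m.+1 <= J -> D m <= 2 * C * J / ((1 - beta) * INR m.+1).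
  move=> k_le; have k_pos : 0 < INR m.+1 by apply: lt_0_INR; apply/ltP.
  apply: Rle_trans (proj2 (D_bounds m)) _.
  have -> : 2 * C * J / ((1 - beta) * INR m.+1)
    = 2 * C + 2 * C * ((J - (1 - beta) * INR m.+1) / ((1 - beta) * INR m.+1)).
    by field; lra.
  suff : 0 <= (J - (1 - beta) * INR m.+1) / ((1 - beta) * INR m.+1) by nra.
  by apply: Rle_mult_inv_pos; nra.
elim=> [|m IH]; first by apply: direct; rewrite /=; lra.
have [k_le | k_ge] := le_Jconst_or_ge m.+2; first exact: direct.
case: m IH k_ge => [_ | m IH] k_ge; first by move: k_ge; rewrite /=; lra.
have k_eq : INR m.+3 = INR m.+2 + 1 := S_INR _.
have := D_rec m.+1; rewrite (alpha_large _ k_ge) => {}D_rec.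
apply: Rle_trans D_rec _; rewrite k_eq.
have [k'_le | k'_ge] := le_Jconst_or_ge m.+2.
  rewrite alpha_small //; apply: recursion_step_threshold => //; nra.
rewrite (alpha_large _ k'_ge); apply: recursion_step_beyond => //; try lra.
by split; [case: (D_bounds m.+1) | exact: IH].
Qed.

End StepSizes.

Section Iteration.
Variables (n : nat) (beta : R) (S T : vec n -> vec n) (x0 xt : vec n).
Hypotheses (beta_ge0 : 0 <= beta) (beta_lt1 : beta < 1)
  (S_contr : is_contraction beta S) (T_nonexp : nonexpansive T) (xt_fix : Fix T xt).

Local Notation X := (iter_x beta S T x0).
Local Notation C := (Cconst beta S x0 xt).
Local Notation J := (Jconst beta).
Local Notation vdist x y := (vnorm (vsub x y)).

Lemma iter_x_succ k i :
  X k.+1 i = alpha beta k.+1 * S (X k) i + (1 - alpha beta k.+1) * T (X k) i.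
Proof. by []. Qed.

Lemma Cconst_ge0 : 0 <= C.
Proof. by apply: Rle_trans (Rmax_l _ _); exact: vnorm_ge0. Qed.

Lemma dist_fixpoint_S : vdist xt (S xt) <= (1 - beta) * C.
Proof.
have -> : vdist xt (S xt) = (1 - beta) * (/ (1 - beta) * vdist xt (S xt)) by field; lra.
by apply: Rmult_le_compat_l; [lra | exact: Rmax_r].
Qed.

Lemma dist_S_fixpoint_le {x} : vdist x xt <= C -> vdist (S x) xt <= C.
Proof.
move=> x_near; apply: Rle_trans (vsub_triangle _ (S xt) _) _.
have := S_contr x xt; have := dist_fixpoint_S; rewrite vsub_sym.
have := Cconst_ge0; nra.
Qed.

Lemma dist_T_fixpoint_le {x} : vdist x xt <= C -> vdist (T x) xt <= C.
Proof. by move=> x_near; have := T_nonexp x xt; rewrite xt_fix; lra. Qed.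

Lemma dist_iter_fixpoint k : vdist (X k) xt <= C.
Proof.
elim: k => [|k IH]; first exact: Rmax_l.
have [a_ge0 a_le1] : 0 <= alpha beta k.+1 <= 1 by apply: alpha_ge0_le1.
rewrite (@eq_vnorm _ _ (fun i => alpha beta k.+1 * vsub (S (X k)) xt i
                               + (1 - alpha beta k.+1) * vsub (T (X k)) xt i));
  last by move=> i; rewrite /vsub iter_x_succ; ring.
apply: Rle_trans (vnorm_comb2 _ _ _ _) _.
rewrite !Rabs_pos_eq; try lra.
have := dist_S_fixpoint_le IH; have := dist_T_fixpoint_le IH; nra.
Qed.

Lemma dist_S_T_iter k : vdist (S (X k)) (T (X k)) <= 2 * C.
Proof.
apply: Rle_trans (vsub_triangle _ xt _) _; rewrite (vsub_sym xt).
have := dist_S_fixpoint_le (dist_iter_fixpoint k).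
have := dist_T_fixpoint_le (dist_iter_fixpoint k); lra.
Qed.

Lemma dist_iter_succ_le k : vdist (X k.+1) (X k) <= 2 * C.
Proof.
apply: Rle_trans (vsub_triangle _ xt _) _; rewrite (vsub_sym xt).
have := dist_iter_fixpoint k; have := dist_iter_fixpoint k.+1; lra.
Qed.

Lemma dist_iter_succ_rec m :
  vdist (X m.+2) (X m.+1) <= (1 - alpha beta m.+2 * (1 - beta)) * vdist (X m.+1) (X m)
     + Rabs (alpha beta m.+2 - alpha beta m.+1) * (2 * C).
Proof.
rewrite (@eq_vnorm _ _ (fun i =>
    alpha beta m.+2 * vsub (S (X m.+1)) (S (X m)) i
    + (1 - alpha beta m.+2) * vsub (T (X m.+1)) (T (X m)) i
    + (alpha beta m.+2 - alpha beta m.+1) * vsub (S (X m)) (T (X m)) i));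
  last by move=> i; rewrite /vsub !iter_x_succ; ring.
have [a_ge0 a_le1] : 0 <= alpha beta m.+2 <= 1 by apply: alpha_ge0_le1.
apply: Rle_trans (vnorm_comb3 _ _ _ _ _ _) _.
rewrite (Rabs_pos_eq (alpha beta m.+2)) // (Rabs_pos_eq (1 - alpha beta m.+2)); last lra.
have := S_contr (X m.+1) (X m); have := T_nonexp (X m.+1) (X m).
have := dist_S_T_iter m; have := Rabs_pos (alpha beta m.+2 - alpha beta m.+1).
nra.
Qed.

Lemma dist_iter_succ_bound m :
  vdist (X m.+1) (X m) <= 2 * C * J / ((1 - beta) * INR m.+1).
Proof.
apply: (@recursive_step_bound _ beta_ge0 beta_lt1 C (fun k => vdist (X k.+1) (X k))).
- exact: Cconst_ge0.
- by move=> k; split; [exact: vnorm_ge0 | exact: dist_iter_succ_le].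
- exact: dist_iter_succ_rec.
Qed.

Lemma dist_T_iter_bound m :
  vdist (T (X m)) (X m) <= 2 * C * (J + 2) / ((1 - beta) * INR m.+1).
Proof.
have k_gt0 : 0 < INR m.+1 by apply: lt_0_INR; apply/ltP.
have [a_ge0 _] : 0 <= alpha beta m.+1 <= 1 by apply: alpha_ge0_le1.
apply: Rle_trans (vsub_triangle _ (X m.+1) _) _.
rewrite vsub_sym (@eq_vnorm _ _ (fun i => alpha beta m.+1 * vsub (S (X m)) (T (X m)) i));
  last by move=> i; rewrite /vsub iter_x_succ; ring.
rewrite vnormZ Rabs_pos_eq //.
have := Rmult_le_compat _ _ _ _ a_ge0 (vnorm_ge0 _) (alpha_le beta m.+1) (dist_S_T_iter m).
have := dist_iter_succ_bound m.
have -> : 2 * C * (J + 2) / ((1 - beta) * INR m.+1) =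
  2 * C * J / ((1 - beta) * INR m.+1) + 2 / ((1 - beta) * INR m.+1) * (2 * C)
  by field; lra.
lra.
Qed.

End Iteration.

Lemma Un_cv_le_inv_succ (f : nat -> R) (K : R) :
  (forall m, 0 <= f m <= K / INR m.+1) -> Un_cv f 0.
Proof.
move=> f_bounds eps eps_gt0.
have K_ge0 : 0 <= K by have := f_bounds 0%nat; rewrite /= Rdiv_1_r; lra.
have : 0 < eps / (K + 1) by apply: Rdiv_lt_0_compat; lra.
move=> /archimed_cor1 [N [invN_lt N_gt0]].
exists N => m m_ge; rewrite /R_dist Rminus_0_r.
have [fm_ge0 fm_le] := f_bounds m; rewrite Rabs_pos_eq //.
have INR_N_gt0 : 0 < INR N by apply: lt_0_INR; lia.
have inv_le : / INR m.+1 <= / INR N by apply: Rinv_le_contravar => //; apply: le_INR; lia.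
have : (K + 1) * / INR N < eps.
  have -> : eps = (K + 1) * (eps / (K + 1)) by field; lra.
  by apply: Rmult_lt_compat_l; lra.
rewrite /Rdiv in fm_le; nra.
Qed.

Theorem lemma4p3 (n : nat) (beta : R) (S T : vec n -> vec n) (x0 : vec n)
  (hbeta0 : 0 <= beta) (hbeta1 : beta < 1)
  (hS : is_contraction beta S) (hT : nonexpansive T)
  (hfix : exists x, Fix T x) :
  forall xt : vec n, Fix T xt ->
    (forall k : nat, (1 <= k)%nat ->
       vnorm (vsub (iter_x beta S T x0 k) (iter_x beta S T x0 (k - 1)))
         <= 2 * Cconst beta S x0 xt * Jconst beta / ((1 - beta) * INR k)
       /\
       vnorm (vsub (T (iter_x beta S T x0 (k - 1))) (iter_x beta S T x0 (k - 1)))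
         <= 2 * Cconst beta S x0 xt * (Jconst beta + 2) / ((1 - beta) * INR k))
    /\ Un_cv (fun k => vnorm (vsub (iter_x beta S T x0 (Datatypes.S k))
                                    (iter_x beta S T x0 k))) 0
    /\ Un_cv (fun k => vnorm (vsub (T (iter_x beta S T x0 k))
                                    (iter_x beta S T x0 k))) 0.
Proof.
move=> xt xt_fix.
have step_bound := @dist_iter_succ_bound _ _ _ _ x0 xt hbeta0 hbeta1 hS hT xt_fix.
have residual_bound := @dist_T_iter_bound _ _ _ _ x0 xt hbeta0 hbeta1 hS hT xt_fix.
have over_k K m : K / ((1 - beta) * INR m.+1) = K / (1 - beta) / INR m.+1.
  have : 0 < INR m.+1 by apply: lt_0_INR; apply/ltP.
  by move=> ?; field; lra.
split.
  case=> [|m] // _; rewrite subn1 /=.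
  by split; [exact: step_bound | exact: residual_bound].
split.
- apply: (@Un_cv_le_inv_succ _ (2 * Cconst beta S x0 xt * Jconst beta / (1 - beta))) => m.
  by rewrite -over_k; split; [exact: vnorm_ge0 | exact: step_bound].
- apply: (@Un_cv_le_inv_succ _ (2 * Cconst beta S x0 xt * (Jconst beta + 2) / (1 - beta))) => m.
  by rewrite -over_k; split; [exact: vnorm_ge0 | exact: residual_bound].
Qed.
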